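(* Consider a uniprocessor system of periodic tasks scheduled by a preemptive fixed-priority scheduler. Let $\tau_v$ be a task (the victim control task) and let $hp(\tau_v)$ be the set of tasks with priority higher than $\tau_v$. Each task $\tau_i \in hp(\tau_v)$ has period $T_i>0$ and worst-case execution time $C_i$ with $0 < C_i \le T_i$, and its jobs are released at times $j\cdot T_i$ for integers $j \ge 0$. Let the $k$-th job of $\tau_v$ be released at time $r'_{v,k} = r_{v,k} + \delta \ge 0$, where $r_{v,k}$ is its nominal release time and $\delta \ge 0$ its release delay. A job of $\tau_i\in hp(\tau_v)$ with index $j$ is called a carry-in job for this victim job if $j\cdot T_i < r'_{v,k}$ and $j\cdot T_i + C_i > r'_{v,k}$, and the carry-in interference $I(k)$ is the total amount $\sum_{\tau_i \in hp(\tau_v)} C_i \cdot \#\{\text{carry-in jobs of } \tau_i\}$. Then $$I(k) = \sum_{\tau_i \in hp(\tau_v)} \max\!\left(0,\ \left\lceil \frac{r'_{v,k}}{T_i}\right\rceil - \left\lfloor \frac{r'_{v,k} - C_i}{T_i}\right\rfloor - 1\right) C_i .$$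
   Context: Preemptive fixed-priority (PFP) scheduling on a single core: at each instant the highest-priority released, unfinished job executes. Each job of a task $\tau_i$ is charged at most its worst-case execution time $C_i$ of interference. $\lceil\cdot\rceil$ and $\lfloor\cdot\rfloor$ denote ceiling and floor. *)

From mathcomp Require Import all_boot all_order all_algebra.
Set Implicit Arguments. Unset Strict Implicit. Unset Printing Implicit Defensive.
Import Order.TTheory GRing.Theory Num.Theory.
Local Open Scope ring_scope.

Definition carry_in {R : archiRealFieldType} (T C r : R) (j : nat) : bool :=
  (j%:R * T < r) && (r < j%:R * T + C).

(* Number of carry-in jobs among all indices j >= 0.  Any carry-in job
   satisfies j*T < r, hence j < r/T <= truncn (r/T) + 1 when T > 0 and r >= 0,
   so counting over the indices 0 .. truncn (r/T) covers all j >= 0. *)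
Definition n_carry_in {R : archiRealFieldType} (T C r : R) : nat :=
  count (carry_in T C r) (iota 0 (Num.truncn (r / T)).+1).

Definition carry_in_interference {R : archiRealFieldType} {hp : finType}
  (T C : hp -> R) (r : R) : R :=
  \sum_(i : hp) C i * (n_carry_in (T i) (C i) r)%:R.

From mathcomp Require Import all_boot all_order all_algebra.
From mathcomp Require Import lra zify.
Import Order.TTheory GRing.Theory Num.Theory.
Local Open Scope ring_scope.

(* Job j is a carry-in job iff the integer j lies in the open interval
   ((r - C) / T, r / T), so I(k) counts integers in such intervals, and an
   open interval (a, x) contains exactly ceil x - floor a - 1 integers.  The
   hypothesis C <= T gives a >= -1, so none of these integers is negative and
   the count over job indices j >= 0 agrees with the formula; C > 0 gives
   a < x, so the formula is nonnegative and the max 0 is inactive. *)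

Lemma count_iota_itv (lo hi n : nat) : (hi <= n)%N ->
  count (fun j => lo <= j < hi)%N (iota 0 n) = (hi - lo)%N.
Proof.
move=> le_hi_n; rewrite -(subnKC le_hi_n) iotaD count_cat add0n.
rewrite (@eq_in_count _ _ pred0 (iota hi _)) ?count_pred0 => [|j]; last first.
  by rewrite mem_iota => /andP[/leq_gtF ->]; rewrite andbF.
rewrite addn0 (@eq_in_count _ _ (leq lo)) => [|j]; last first.
  by rewrite mem_iota add0n => /andP[_ ->]; rewrite andbT.
elim: hi {le_hi_n} => [|hi IHhi] //.
by rewrite -addn1 iotaD count_cat IHhi /= addn0; case: leqP => lo_hi; lia.
Qed.

Section ArchiRealField.

Variable R : archiRealFieldType.

Lemma count_nat_in_open_itv (a x : R) (n : nat) :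
  -1 <= a -> a < x -> x <= n%:R ->
  (count (fun j : nat => a < j%:R < x) (iota 0 n))%:Z
    = Num.ceil x - Num.floor a - 1.
Proof.
move=> a_ge_N1 a_lt_x x_le_n.
have [lo floorE] : exists lo : nat, Num.floor a + 1 = lo.
  have floor_ge : -1 <= Num.floor a by rewrite floor_ge_int.
  by exists `|(Num.floor a + 1)%R|%N; rewrite gez0_abs //; lia.
have [hi ceilE] : exists hi : nat, Num.ceil x = hi.
  exists `|Num.ceil x|%N; rewrite gez0_abs // ceil_ge0.
  by apply: le_lt_trans a_lt_x.
have lo_le_hi : (lo <= hi)%N.
  rewrite -lez_nat -floorE -ceilE lezD1 ceil_gt_int.
  exact: le_lt_trans (floor_le a) a_lt_x.
have hi_le_n : (hi <= n)%N by rewrite -lez_nat -ceilE ceil_le_int.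
have memE (j : nat) : (a < j%:R < x) = (lo <= j < hi)%N.
  by rewrite !pmulrn -floor_lt_int -ceil_gt_int -lezD1 floorE ceilE lez_nat ltz_nat.
rewrite (eq_count memE) count_iota_itv // ceilE; lia.
Qed.

Lemma carry_inE (T C r : R) (j : nat) : 0 < T ->
  carry_in T C r j = ((r - C) / T < j%:R < r / T).
Proof.
move=> T_gt0; rewrite /carry_in ltr_pdivlMr // ltr_pdivrMr // andbC.
by congr (_ && _); apply/idP/idP; lra.
Qed.

Lemma n_carry_inE (T C r : R) :
  0 < T -> 0 < C -> C <= T -> 0 <= r ->
  (n_carry_in T C r)%:Z = Num.ceil (r / T) - Num.floor ((r - C) / T) - 1.
Proof.
move=> T_gt0 C_gt0 C_le_T r_ge0.
rewrite /n_carry_in (eq_count (fun j => carry_inE T C r j T_gt0)).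
apply: count_nat_in_open_itv.
- by rewrite ler_pdivlMr // mulN1r; lra.
- by rewrite ltr_pM2r ?invr_gt0 //; lra.
- exact/ltW/truncnS_gt.
Qed.

End ArchiRealField.

Theorem lemma1 (R : archiRealFieldType) (hp : finType) (T C : hp -> R)
  (r_nom delta : R)
  (hT : forall i, 0 < T i) (hC0 : forall i, 0 < C i) (hCT : forall i, C i <= T i)
  (hdelta : 0 <= delta) (hr : 0 <= r_nom + delta) :
  carry_in_interference T C (r_nom + delta) =
  \sum_(i : hp)
     (Num.max 0 (Num.ceil ((r_nom + delta) / T i)
                 - Num.floor ((r_nom + delta - C i) / T i) - 1))%:~R * C i.
Proof.
apply: eq_bigr => i _.
by rewrite -n_carry_inE // max_r // mulrC.
Qed.
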